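(* Every triangulated polygon $T$ with no interior vertices has a (possibly disconnected) scaffold.
   Context: A triangulated polygon with no interior vertices is a finite $2$-dimensional simplicial complex homeomorphic to a closed disk all of whose vertices lie on the boundary; its triangles are called facets. The (vertex-facet) incidence graph of $T$ is the bipartite graph whose nodes are the facets and vertices of $T$, with an arc $(v,f)$ whenever $v$ is a vertex of $f$. A scaffold is a subgraph of the incidence graph containing every facet node, in which every facet node has degree exactly $2$ and at most two vertex nodes have odd degree. (The empty triangulation has the empty scaffold.) *)

From mathcomp Require Import all_boot.
Set Implicit Arguments. Unset Strict Implicit. Unset Printing Implicit Defensive.

(* All vertices lie on the boundary cycle, so (up to isomorphism) the vertex
   set is 'I_n with the boundary cycle 0,1,...,n-1,0 (convex position), and a
   facet is a 3-element subset of 'I_n.  A set of such triangles is the facet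
   set of a triangulation of the convex n-gon iff distinct triangles have
   disjoint interiors (no two edges properly cross) and there are n-2 of them. *)

Definition strictly_between (a b x : nat) : bool := (minn a b < x < maxn a b)%N.

Definition chords_cross (a b c d : nat) : bool :=
  [&& a != b, c != d, a != c, a != d, b != c, b != d &
      strictly_between a b c != strictly_between a b d].

Definition is_triangle (n : nat) (f : {set 'I_n}) : bool := #|f| == 3.

Definition triangulated_polygon (n : nat) (T : {set {set 'I_n}}) : Prop :=
  [/\ (3 <= n)%N,
      {in T, forall f : {set 'I_n}, is_triangle f},
      {in T &, forall f g : {set 'I_n}, f != g ->
         forall a b c d : 'I_n, a \in f -> b \in f -> c \in g -> d \in g ->
           ~~ chords_cross a b c d}
    & #|T| = (n - 2)%N].

(* A scaffold of T: a set S of arcs (v,f) of the vertex-facet incidence graph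
   (v a vertex of the facet f in T), such that every facet node has degree
   exactly 2 and at most two vertex nodes have odd degree. *)
Definition facet_degree (n : nat) (S : {set 'I_n * {set 'I_n}}) (f : {set 'I_n}) : nat :=
  #|[set v | (v, f) \in S]|.
Definition vertex_degree (n : nat) (S : {set 'I_n * {set 'I_n}}) (v : 'I_n) : nat :=
  #|[set f | (v, f) \in S]|.

Definition scaffold (n : nat) (T : {set {set 'I_n}}) (S : {set 'I_n * {set 'I_n}}) : Prop :=
  [/\ {in S, forall e, (e.2 \in T) && (e.1 \in e.2)},
      {in T, forall f : {set 'I_n}, facet_degree S f = 2}
    & (#|[set v | odd (vertex_degree S v)]| <= 2)%N].

From mathcomp Require Import all_boot zify.
Set Implicit Arguments. Unset Strict Implicit. Unset Printing Implicit Defensive.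

(* The facets lying in a boundary arc
   [lo, hi] number at most hi - lo - 1, and when there are exactly that many, some facet
   t = {lo, m, hi} rests on the chord {lo, hi}: otherwise non-crossing separates them at a
   single vertex of the arc, leaving at most hi - lo - 2.  Induction on hi - lo then builds,
   for every such full arc, a scaffold whose only possibly odd vertices are lo and hi, with
   equal parities: glue the scaffolds of [lo, m] and [m, hi] and link t to lo and to
   whichever of m, hi keeps m even. *)

Section Incidences.

Variable n : nat.
Implicit Types (S : {set 'I_n * {set 'I_n}}) (E f t : {set 'I_n}) (v : 'I_n).

Lemma card_preimsetU (aT rT : finType) (h : aT -> rT) (A B : {set rT}) :
  [disjoint A & B] -> #|h @^-1: (A :|: B)| = #|h @^-1: A| + #|h @^-1: B|.
Proof.
move=> disjAB; rewrite preimsetU (eqTleqif (leq_card_setU _ _)) //.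
by rewrite -setI_eq0 -preimsetI (disjoint_setI0 disjAB) preimset0.
Qed.

Lemma vertex_degreeU S1 S2 v : [disjoint S1 & S2] ->
  vertex_degree (S1 :|: S2) v = vertex_degree S1 v + vertex_degree S2 v.
Proof. exact: (card_preimsetU (pair v)). Qed.

Lemma facet_degreeU S1 S2 f : [disjoint S1 & S2] ->
  facet_degree (S1 :|: S2) f = facet_degree S1 f + facet_degree S2 f.
Proof. exact: (card_preimsetU (fun v => (v, f))). Qed.

Lemma vertex_degree0 v : vertex_degree set0 v = 0.
Proof. by apply/eqP; rewrite cards_eq0; apply/eqP/setP => f; rewrite !inE. Qed.

Lemma facet_degree_eq0 S (X : {set {set 'I_n}}) f :
  {in S, forall e, e.2 \in X} -> f \notin X -> facet_degree S f = 0.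
Proof.
move=> S_X fX; apply/eqP; rewrite cards_eq0; apply/eqP/setP => v; rewrite !inE.
by apply: contraNF fX => /S_X.
Qed.

Lemma disjoint_incidences S1 S2 (X1 X2 : {set {set 'I_n}}) :
  {in S1, forall e, e.2 \in X1} -> {in S2, forall e, e.2 \in X2} ->
  [disjoint X1 & X2] -> [disjoint S1 & S2].
Proof.
move=> S1_X1 S2_X2 disjX; apply/pred0P => e /=; apply/andP => -[/S1_X1 eX1 /S2_X2].
by rewrite (disjointFr disjX eX1).
Qed.

Lemma vertex_degree_setX1 E t v : vertex_degree (setX E [set t]) v = (v \in E).
Proof.
rewrite /vertex_degree; case: (boolP (v \in E)) => vE /=.
  by rewrite -(cards1 t); apply: eq_card => f; rewrite !inE /= vE.
by apply/eqP; rewrite cards_eq0; apply/eqP/setP => f; rewrite !inE /= (negbTE vE).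
Qed.

Lemma facet_degree_setX1 E t f : facet_degree (setX E [set t]) f = (f == t) * #|E|.
Proof.
rewrite /facet_degree; case: eqP => [-> | /eqP ft]; rewrite ?mul1n ?mul0n.
  by apply: eq_card => v; rewrite !inE eqxx andbT.
by apply/eqP; rewrite cards_eq0; apply/eqP/setP => v; rewrite !inE (negbTE ft) andbF.
Qed.

End Incidences.

Section SubPolygons.

Variables (n : nat) (T : {set {set 'I_n}}).
Hypothesis T_triangles : {in T, forall f, is_triangle f}.
Hypothesis T_noncrossing : {in T &, forall f g : {set 'I_n}, f != g ->
  forall a b c d : 'I_n, a \in f -> b \in f -> c \in g -> d \in g ->
    ~~ chords_cross a b c d}.

Implicit Types (f g t s : {set 'I_n}) (lo hi a b m v : 'I_n).

Definition arc lo hi : {set 'I_n} := [set v : 'I_n | lo <= v <= hi].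

Definition facets_in lo hi : {set {set 'I_n}} := [set f in T | f \subset arc lo hi].

Lemma facets_inP {f lo hi} :
  reflect (f \in T /\ f \subset arc lo hi) (f \in facets_in lo hi).
Proof. by rewrite inE; apply: andP. Qed.

Lemma card_arc lo hi : #|arc lo hi| <= hi.+1 - lo.
Proof.
rewrite -(size_iota lo (hi.+1 - lo)) cardE -(size_map (@nat_of_ord n)).
apply: uniq_leq_size => [|x /mapP[v]].
  by rewrite (map_inj_uniq (@ord_inj n)) enum_uniq.
by rewrite mem_enum inE mem_iota => /andP[lo_v v_hi] ->; lia.
Qed.

Lemma arc_inner lo hi v : v \in arc lo hi -> v != lo -> v != hi -> lo < v < hi.
Proof. by rewrite inE -!val_eqE /=; lia. Qed.

Lemma card_facet f : f \in T -> #|f| = 3.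
Proof. by move/T_triangles/eqP. Qed.

Lemma facets_in_gap f lo hi : f \in facets_in lo hi -> lo.+1 < hi.
Proof.
case/facets_inP => /card_facet f3 /subset_leq_card; have := card_arc lo hi.
by rewrite f3; lia.
Qed.

Lemma facets_in0 lo hi : hi <= lo.+1 -> facets_in lo hi = set0.
Proof.
move=> short; apply/setP => f; rewrite in_set0.
by apply: contraTF short => /facets_in_gap; lia.
Qed.

Lemma facets_in_disjoint lo m hi : [disjoint facets_in lo m & facets_in m hi].
Proof.
apply/pred0P => f /=; apply/negbTE/negP => /andP[fL fR].
suff /facets_in_gap : f \in facets_in m m by lia.
move: fL fR => /facets_inP[fT /subsetP fL] /facets_inP[_ /subsetP fR].
rewrite inE fT.
by apply/subsetP => v vf; move: (fL v vf) (fR v vf); rewrite !inE; lia.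
Qed.

Lemma facets_in_sub lo hi lo' hi' :
  lo <= lo' -> hi' <= hi -> facets_in lo' hi' \subset facets_in lo hi.
Proof.
move=> le_lo le_hi; apply/subsetP => f; rewrite !inE => /andP[-> /subsetP sub].
by apply/subsetP => v /sub; rewrite !inE; lia.
Qed.

Lemma facet_eq3 t a b m : t \in T -> a \in t -> m \in t -> b \in t ->
  a != m -> a != b -> m != b -> t = [set a; m; b].
Proof.
move=> tT ta tm tb am ab mb; apply/eqP; rewrite eq_sym eqEcard card_facet //.
rewrite [in X in _ <= X]setUC cardsU1 cards2 !inE negb_or !(eq_sym b) ab mb am /= andbT.
by apply/subsetP => v; rewrite !inE => /orP[/orP[]|] /eqP ->.
Qed.

Lemma crossing_facets_eq f g a b (x y : 'I_n) : f \in T -> g \in T ->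
  a \in f -> b \in f -> x \in g -> y \in g -> a < x < b -> (y < a) || (b < y) -> f = g.
Proof.
move=> fT gT af bf xg yg axb y_out; apply/eqP/negPn/negP => fg.
move/negP: (T_noncrossing fT gT fg af bf xg yg); apply.
rewrite /chords_cross /strictly_between; lia.
Qed.

Lemma facet_on_one_side f g a b : f \in T -> g \in T -> f != g -> a \in f -> b \in f ->
  g \subset arc a b \/ {in g, forall y : 'I_n, (y <= a) || (b <= y)}.
Proof.
move=> fT gT fg af bf.
case: (boolP [exists x in g, a < x < b]) => [/exists_inP[x xg axb] | no_inside].
  left; apply/subsetP => y yg; rewrite inE; apply/negPn/negP => y_out.
  by move/eqP: fg; apply; apply: (crossing_facets_eq fT gT af bf xg yg axb); lia.
right => y yg; apply/negPn/negP => y_in; move/negP: no_inside; apply.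
by apply/exists_inP; exists y => //; lia.
Qed.

Lemma facets_in_apex_split t a m b : t \in T -> a \in t -> m \in t -> b \in t ->
  a < m < b -> facets_in a b = t |: (facets_in a m :|: facets_in m b).
Proof.
move=> tT ta tm tb amb.
have t_eq : t = [set a; m; b] by apply: facet_eq3 => //; rewrite -val_eqE /=; lia.
apply/setP => s; rewrite in_setU1 in_setU; apply/idP/idP => [sI | ].
  case: eqP => [// | /eqP st] /=; move: sI; rewrite !inE => /andP[sT /subsetP s_ab].
  have ts : t != s by rewrite eq_sym.
  rewrite sT; case: (facet_on_one_side tT sT ts ta tm) => [-> // | s_out_am].
  case: (facet_on_one_side tT sT ts tm tb) => [-> | s_out_mb]; first by rewrite orbT.
  exfalso; move/eqP: st; apply; apply/eqP; rewrite eqEcard !card_facet // andbT t_eq.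
  apply/subsetP => v vs; have := s_ab v vs; have := s_out_am v vs.
  by have := s_out_mb v vs; rewrite !inE -!val_eqE /=; lia.
case/orP => [/eqP -> | /orP[] sI].
- by rewrite inE tT t_eq; apply/subsetP => v; rewrite !inE => /orP[/orP[]|] /eqP ->; lia.
- by apply: (subsetP (facets_in_sub _ _)) sI; lia.
- by apply: (subsetP (facets_in_sub _ _)) sI; lia.
Qed.

Lemma apex_facet_notin t a m b : t \in T -> a \in t -> b \in t -> a < m < b ->
  t \notin facets_in a m /\ t \notin facets_in m b.
Proof.
move=> tT ta tb amb; rewrite !inE tT /=.
by split; apply/subsetP; [move=> /(_ b tb) | move=> /(_ a ta)]; rewrite inE; lia.
Qed.

Lemma card_facets_in_apex t a m b : t \in T -> a \in t -> m \in t -> b \in t ->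
  a < m < b -> #|facets_in a b| = (#|facets_in a m| + #|facets_in m b|).+1.
Proof.
move=> tT ta tm tb amb; have [tL tR] := apex_facet_notin tT ta tb amb.
rewrite (facets_in_apex_split tT ta tm tb amb) cardsU1 in_setU (negbTE tL) (negbTE tR).
by rewrite (eqTleqif (leq_card_setU _ _) (facets_in_disjoint a m b)).
Qed.

Lemma facets_in_apex t lo hi : t \in facets_in lo hi -> lo \in t -> hi \in t ->
  exists2 m, m \in t & lo < m < hi.
Proof.
case/facets_inP => tT /subsetP t_arc lot hit.
have: 0 < #|t :\: [set lo; hi]|.
  rewrite cardsD card_facet //; have := subset_leq_card (subsetIr t [set lo; hi]).
  by rewrite cards2; case: (lo != hi) => /=; lia.
case/card_gt0P => m; rewrite !inE negb_or => /andP[/andP[m_lo m_hi] mt].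
by exists m => //; exact: arc_inner (t_arc m mt) m_lo m_hi.
Qed.

Lemma facets_in_split_no_apex lo hi : lo.+1 < hi ->
  ~~ [exists s in facets_in lo hi, (lo \in s) && (hi \in s)] ->
  exists2 M : 'I_n, lo < M < hi & facets_in lo hi \subset facets_in lo M :|: facets_in M hi.
Proof.
move=> long no_apex.
(* M is the farthest vertex below hi sharing a facet with lo (or lo + 1): a facet
   straddling M would cross the chord {lo, M}. *)
pose P (j : 'I_n) := (lo < j < hi) &&
  ((j == lo.+1 :> nat) || [exists s in facets_in lo hi, (lo \in s) && (j \in s)]).
have P_lo1 : P (Ordinal (ltn_trans long (ltn_ord hi))) by rewrite /P /= eqxx ltnSn long.
case: (arg_maxnP (@nat_of_ord n) P_lo1) => M /andP[lMh PM] M_max.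
exists M => //; apply/subsetP => s sI; rewrite in_setU.
have [sT /subsetP s_arc] := facets_inP sI.
case: (boolP (lo \in s)) => [los | lo_s].
  apply/orP; left; rewrite inE sT; apply/subsetP => v vs.
  have [-> | v_lo] := eqVneq v lo; first by rewrite inE leqnn ltnW // (andP lMh).1.
  have v_hi : v != hi.
    by apply: contraNneq no_apex => v_hi; apply/exists_inP; exists s; rewrite // los -v_hi.
  have v_in := arc_inner (s_arc v vs) v_lo v_hi.
  have /M_max le_vM : P v.
    by rewrite /P v_in; apply/orP; right; apply/exists_inP; exists s; rewrite // los.
  by rewrite inE (ltnW (andP v_in).1); apply: le_vM.
have lo_lt_s v : v \in s -> lo < v.
  move=> vs; have v_lo : v != lo by apply: contraNneq lo_s => <-.
  by move: (s_arc v vs) v_lo; rewrite inE -val_eqE /=; clear; lia.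
case/orP: PM => [/eqP M_lo1 | /exists_inP[t tI /andP[lot Mt]]].
  apply/orP; right; rewrite inE sT; apply/subsetP => v vs.
  by move: (s_arc v vs) (lo_lt_s v vs) M_lo1; rewrite !inE; clear; lia.
have [tT _] := facets_inP tI.
have ts : t != s by apply: contraNneq lo_s => <-.
case: (facet_on_one_side tT sT ts lot Mt) => [s_lM | s_out]; apply/orP; [left | right].
  by rewrite inE sT.
rewrite inE sT; apply/subsetP => v vs; move: (s_arc v vs) (s_out v vs) (lo_lt_s v vs).
by rewrite !inE; clear; lia.
Qed.

Lemma card_facets_in_le lo hi : #|facets_in lo hi| <= hi - lo.+1.
Proof.
have [d] := ubnP (hi - lo); elim: d => // d IH in lo hi *; rewrite ltnS => le_d.
case: (leqP hi lo.+1) => [short | long]; first by rewrite facets_in0 ?cards0.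
case: (boolP [exists t in facets_in lo hi, (lo \in t) && (hi \in t)]) => [apex | no_apex].
  have /exists_inP[t tI /andP[lot hit]] := apex.
  have [m mt lmh] := facets_in_apex tI lot hit.
  have [tT _] := facets_inP tI.
  have bL : #|facets_in lo m| <= m - lo.+1 by apply: IH; lia.
  have bR : #|facets_in m hi| <= hi - m.+1 by apply: IH; lia.
  by rewrite (card_facets_in_apex tT lot mt hit lmh); lia.
have [M lMh sub] := facets_in_split_no_apex long no_apex.
have bL : #|facets_in lo M| <= M - lo.+1 by apply: IH; lia.
have bR : #|facets_in M hi| <= hi - M.+1 by apply: IH; lia.
have := leq_trans (subset_leq_card sub) (leq_of_leqif (leq_card_setU _ _)); lia.
Qed.

Lemma full_facets_in_apex lo hi : lo.+1 < hi -> #|facets_in lo hi| = hi - lo.+1 ->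
  [exists t in facets_in lo hi, (lo \in t) && (hi \in t)].
Proof.
move=> long full; apply: contraT => no_apex.
have [M lMh sub] := facets_in_split_no_apex long no_apex.
have := leq_trans (subset_leq_card sub) (leq_of_leqif (leq_card_setU _ _)).
by have := card_facets_in_le lo M; have := card_facets_in_le M hi; lia.
Qed.

Definition partial_scaffold lo hi (S : {set 'I_n * {set 'I_n}}) : Prop :=
  [/\ {in S, forall e, (e.2 \in facets_in lo hi) && (e.1 \in e.2)},
      {in facets_in lo hi, forall f, facet_degree S f = 2},
      [set v | odd (vertex_degree S v)] \subset [set lo; hi]
    & odd (vertex_degree S lo) = odd (vertex_degree S hi)].

Lemma partial_scaffold_even lo hi S v : partial_scaffold lo hi S ->
  v != lo -> v != hi -> ~~ odd (vertex_degree S v).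
Proof.
case=> _ _ /subsetP odd_lohi _ v_lo v_hi; apply/negP => odd_v.
by move: (odd_lohi v); rewrite !inE odd_v (negbTE v_lo) (negbTE v_hi) => /(_ isT).
Qed.

Section Glue.

Variables (t : {set 'I_n}) (a m b : 'I_n) (SL SR : {set 'I_n * {set 'I_n}}).
Implicit Type E : {set 'I_n}.
Hypotheses (tT : t \in T) (ta : a \in t) (tm : m \in t) (tb : b \in t) (amb : a < m < b).
Hypotheses (SLs : partial_scaffold a m SL) (SRs : partial_scaffold m b SR).

Definition glue E : {set 'I_n * {set 'I_n}} := SL :|: SR :|: setX E [set t].

Let SL_facets : {in SL, forall e, e.2 \in facets_in a m}.
Proof. by case: SLs => SL_arcs _ _ _ e /SL_arcs /andP[]. Qed.

Let SR_facets : {in SR, forall e, e.2 \in facets_in m b}.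
Proof. by case: SRs => SR_arcs _ _ _ e /SR_arcs /andP[]. Qed.

Let t_notin : t \notin facets_in a m /\ t \notin facets_in m b.
Proof. exact: apex_facet_notin. Qed.

Let disjLR : [disjoint SL & SR].
Proof. exact: disjoint_incidences SL_facets SR_facets (facets_in_disjoint a m b). Qed.

Let disjLRt E : [disjoint SL :|: SR & setX E [set t]].
Proof.
have [tL tR] := t_notin.
apply: (disjoint_incidences (X1 := facets_in a m :|: facets_in m b) (X2 := [set t])).
- by move=> e; rewrite !in_setU => /orP[/SL_facets | /SR_facets] ->; rewrite ?orbT.
- by move=> [v f]; rewrite in_setX => /andP[].
- by rewrite disjoint_sym disjoints1 in_setU negb_or tL tR.
Qed.

Lemma vertex_degree_glue E v :
  vertex_degree (glue E) v = vertex_degree SL v + vertex_degree SR v + (v \in E).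
Proof. by rewrite vertex_degreeU // vertex_degreeU // vertex_degree_setX1. Qed.

Lemma glue_arcs E : E \subset t ->
  {in glue E, forall e, (e.2 \in facets_in a b) && (e.1 \in e.2)}.
Proof.
have [SL_arcs _ _ _] := SLs; have [SR_arcs _ _ _] := SRs.
have [/ltnW am /ltnW mb] := andP amb.
move=> /subsetP Et e; rewrite !in_setU => /orP[/orP[] | ].
- move=> /SL_arcs /andP[eI ->]; rewrite andbT.
  exact: (subsetP (facets_in_sub (leqnn a) mb)) eI.
- move=> /SR_arcs /andP[eI ->]; rewrite andbT.
  exact: (subsetP (facets_in_sub am (leqnn b))) eI.
- case: e => v f; rewrite in_setX in_set1 => /andP[/Et vt /eqP /= ->]; rewrite vt andbT.
  by rewrite (facets_in_apex_split tT ta tm tb amb) setU11.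
Qed.

Lemma facet_degree_glue E : #|E| = 2 ->
  {in facets_in a b, forall f, facet_degree (glue E) f = 2}.
Proof.
have [_ SL_deg _ _] := SLs; have [_ SR_deg _ _] := SRs; have [tL tR] := t_notin.
move=> E2 f; rewrite (facets_in_apex_split tT ta tm tb amb) in_setU1 in_setU.
rewrite !facet_degreeU // facet_degree_setX1 E2.
case/orP => [/eqP -> | /orP[fL | fR]].
- by rewrite (facet_degree_eq0 SL_facets tL) (facet_degree_eq0 SR_facets tR) eqxx.
- have fR : f \notin facets_in m b by rewrite (disjointFr (facets_in_disjoint a m b) fL).
  have ft : (f == t) = false by apply: contraNF tL => /eqP <-.
  by rewrite SL_deg // (facet_degree_eq0 SR_facets fR) ft.
- have fL : f \notin facets_in a m by rewrite (disjointFl (facets_in_disjoint a m b) fR).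
  have ft : (f == t) = false by apply: contraNF tR => /eqP <-.
  by rewrite SR_deg // (facet_degree_eq0 SL_facets fL) ft.
Qed.

Lemma partial_scaffold_glue : exists S, partial_scaffold a b S.
Proof.
have [_ _ _ SL_par] := SLs; have [_ _ _ SR_par] := SRs.
have [lt_am lt_mb] := andP amb; have lt_ab := ltn_trans lt_am lt_mb.
have [am ab mb] : [/\ a != m, a != b & m != b] by rewrite -!val_eqE /= !ltn_eqF.
have [ba bm] : b != a /\ b != m by rewrite -!val_eqE /= !gtn_eqF.
(* Linking t to m exactly when m has odd degree makes m even and a, b of equal parity. *)
pose parity_m := odd (vertex_degree SL m + vertex_degree SR m).
pose E := [set a; if parity_m then m else b].
have mE : (m \in E) = parity_m.
  by rewrite !inE eq_sym (negbTE am); case: ifP; rewrite ?eqxx // (negbTE mb).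
have bE : (b \in E) = ~~ parity_m.
  by rewrite !inE eq_sym (negbTE ab); case: ifP; rewrite ?eqxx // (negbTE bm).
exists (glue E); split.
- by apply: glue_arcs; apply/subsetP => v; rewrite !inE => /orP[] /eqP -> //; case: ifP.
- by apply: facet_degree_glue; rewrite cards2; case: ifP; rewrite ?am ?ab.
- apply/subsetP => v; rewrite !inE vertex_degree_glue; apply: contraTT.
  rewrite negb_or => /andP[va vb]; case: (eqVneq v m) => [-> | vm].
    by rewrite mE oddD oddb addbb.
  have vE : v \notin E by rewrite !inE negb_or va; case: ifP.
  rewrite (negbTE vE) addn0 oddD (negbTE (partial_scaffold_even SLs va vm)).
  by rewrite (negbTE (partial_scaffold_even SRs vm vb)).
- rewrite !vertex_degree_glue bE !inE eqxx !oddD oddb SL_par -SR_par.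
  rewrite (negbTE (partial_scaffold_even SRs am ab)).
  rewrite (negbTE (partial_scaffold_even SLs ba bm)) /parity_m oddD.
  by case: (odd (vertex_degree SL m)); case: (odd (vertex_degree SR m)).
Qed.

End Glue.

Lemma partial_scaffold_exists lo hi :
  #|facets_in lo hi| = hi - lo.+1 -> exists S, partial_scaffold lo hi S.
Proof.
have [d] := ubnP (hi - lo); elim: d => // d IH in lo hi *; rewrite ltnS => le_d full.
case: (leqP hi lo.+1) => [short | long].
  exists set0; rewrite /partial_scaffold facets_in0 //; split=> [e | f | | ].
  - by rewrite inE.
  - by rewrite inE.
  - by apply/subsetP => v; rewrite inE vertex_degree0.
  - by rewrite !vertex_degree0.
have /exists_inP[t tI /andP[lot hit]] := full_facets_in_apex long full.
have [m mt lmh] := facets_in_apex tI lot hit.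
have [tT _] := facets_inP tI.
have [fullL fullR] : #|facets_in lo m| = m - lo.+1 /\ #|facets_in m hi| = hi - m.+1.
  move: (card_facets_in_apex tT lot mt hit lmh) (card_facets_in_le lo m).
  by move: (card_facets_in_le m hi) full lmh; clear; lia.
have [SL SLs] : exists SL, partial_scaffold lo m SL.
  by apply: IH fullL; move: le_d lmh; clear; lia.
have [SR SRs] : exists SR, partial_scaffold m hi SR.
  by apply: IH fullR; move: le_d lmh; clear; lia.
exact: partial_scaffold_glue tT lot mt hit lmh SLs SRs.
Qed.

End SubPolygons.

Theorem lemma3 (n : nat) (T : {set {set 'I_n}}) :
  triangulated_polygon T -> exists S : {set 'I_n * {set 'I_n}}, scaffold T S.
Proof.
case: n T => [|n] T [n_ge3 T_triangles T_noncrossing card_T] //.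
have facets_T : facets_in T ord0 ord_max = T.
  apply/setP => f; rewrite inE andb_idr // => _.
  by apply/subsetP => v _; rewrite inE leq_ord.
have [S [S_arcs S_deg S_odd _]] :
    exists S, partial_scaffold T ord0 ord_max S.
  have := partial_scaffold_exists T_triangles T_noncrossing (lo := ord0) (hi := ord_max).
  by apply; rewrite facets_T card_T /=; lia.
rewrite facets_T in S_arcs S_deg; exists S; split => //.
by rewrite (leq_trans (subset_leq_card S_odd)) // cards2 ltnS leq_b1.
Qed.
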